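(* Let $a,b$ be positive integers, $d=\gcd(a,b)$, and suppose $a/d$ and $b/d$ are odd. Let $\alpha,\beta,\alpha',\beta'\in\mathbb{N}_0$ satisfy $d=\alpha a-\beta b$ and $-d=\alpha'a-\beta'b$, with $\alpha+\beta$ least possible and $\alpha'+\beta'$ least possible among such solutions. Then both $\alpha+\beta$ and $\alpha'+\beta'$ are odd, i.e. $E_{(-b,a)}^{(\infty,\infty)}$ is of case $(4')$.
   Context: $E_{(-b,a)}^{(\infty,\infty)}$ is the $\mathbb{Z}$-grading on the Grassmann algebra of an infinite-dimensional space with basis $e_1,e_2,\dots$ in which the basis is split into two infinite sets whose elements have degrees $-b$ and $a$ respectively (monomials get the sum of degrees). It is said to be of case $(4')$ when the minimal sums $\alpha+\beta$ and $\alpha'+\beta'$ defined in the claim are both odd. *)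

From mathcomp Require Import all_boot.
Set Implicit Arguments. Unset Strict Implicit. Unset Printing Implicit Defensive.

(* (al, be) in N_0^2 solves  d = al*a - be*b  (an identity in Z, written in nat
   without subtraction: al*a = d + be*b). *)
Definition sol_pos (a b d al be : nat) : Prop := al * a = d + be * b.
(* (al, be) solves  -d = al*a - be*b, i.e. al*a + d = be*b. *)
Definition sol_neg (a b d al be : nat) : Prop := al * a + d = be * b.

(* Dividing a solution of [d = al a - be b] by [d = gcd(a, b)] gives
   [1 = al x - be y] with [x = a/d] and [y = b/d] odd.  Modulo 2 this reads
   [1 = al + be], so every solution, not only a minimal one, has odd [al + be];
   the same holds for [-d]. *)

From mathcomp Require Import all_boot.

Set Implicit Arguments. Unset Strict Implicit.

Section ScaleSolutions.

Variables (a b d c al be : nat).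
Hypotheses (c_gt0 : 0 < c) (c_dvd_a : c %| a) (c_dvd_b : c %| b) (c_dvd_d : c %| d).

Lemma sol_pos_divn :
  sol_pos a b d al be -> sol_pos (a %/ c) (b %/ c) (d %/ c) al be.
Proof.
rewrite /sol_pos => def_a; apply/eqP; rewrite -(eqn_pmul2r c_gt0).
by rewrite mulnDl -!mulnA !divnK // def_a.
Qed.

Lemma sol_neg_divn :
  sol_neg a b d al be -> sol_neg (a %/ c) (b %/ c) (d %/ c) al be.
Proof.
rewrite /sol_neg => def_b; apply/eqP; rewrite -(eqn_pmul2r c_gt0).
by rewrite mulnDl -!mulnA !divnK // def_b.
Qed.

End ScaleSolutions.

Section OddCoefficients.

Variables (x y d al be : nat).
Hypotheses (odd_x : odd x) (odd_y : odd y).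

Lemma odd_sol_pos : sol_pos x y d al be -> odd (al + be) = odd d.
Proof.
move/(congr1 odd); rewrite !oddD !oddM odd_x odd_y !andbT => ->.
by case: (odd d); case: (odd be).
Qed.

Lemma odd_sol_neg : sol_neg x y d al be -> odd (al + be) = odd d.
Proof.
move/(congr1 odd); rewrite !oddD !oddM odd_x odd_y !andbT => <-.
by case: (odd d); case: (odd al).
Qed.

End OddCoefficients.

Theorem lemma4p12 (a b al be al' be' : nat) :
  0 < a -> 0 < b ->
  odd (a %/ gcdn a b) -> odd (b %/ gcdn a b) ->
  sol_pos a b (gcdn a b) al be ->
  (forall g h, sol_pos a b (gcdn a b) g h -> al + be <= g + h) ->
  sol_neg a b (gcdn a b) al' be' ->
  (forall g h, sol_neg a b (gcdn a b) g h -> al' + be' <= g + h) ->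
  odd (al + be) /\ odd (al' + be').
Proof.
move=> a_gt0 _ odd_x odd_y pos_sol _ neg_sol _.
have d_gt0 : 0 < gcdn a b by rewrite gcdn_gt0 a_gt0.
have [dvd_a dvd_b] := (dvdn_gcdl a b, dvdn_gcdr a b).
have := sol_pos_divn d_gt0 dvd_a dvd_b (dvdnn _) pos_sol.
have := sol_neg_divn d_gt0 dvd_a dvd_b (dvdnn _) neg_sol.
by rewrite divnn d_gt0 => /(odd_sol_neg odd_x odd_y) -> /(odd_sol_pos odd_x odd_y) ->.
Qed.
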